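(* Let $(X,d)$ and $(Y,d')$ be metric spaces, $x_0\in X$, $y_0\in Y$, $n\geq 1$, with induced pseudometrics $\rho$ on $\pi_n(X,x_0)$ and $\rho'$ on $\pi_n(Y,y_0)$. If $f:(X,d)\to(Y,d')$ is uniformly continuous with $f(x_0)=y_0$, then the induced homomorphism $f_\#:(\pi_n(X,x_0),\rho)\to(\pi_n(Y,y_0),\rho')$ is uniformly continuous.
   Context: For a metric space $(Z,\delta)$ with basepoint $z_0$, $\Omega^n(Z,z_0)$ is the set of continuous maps $\alpha:[0,1]^n\to Z$ with $\alpha(\partial[0,1]^n)=\{z_0\}$, with uniform metric $\mu(\alpha,\beta)=\sup_{t}\delta(\alpha(t),\beta(t))$, and the induced pseudometric on $\pi_n(Z,z_0)$ is $\rho(a,b)=\inf\{\mu(\alpha,\beta)\mid\alpha\in a,\beta\in b\}$. *)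

From HB Require Import structures.
From mathcomp Require Import all_boot all_order all_algebra.
From mathcomp Require Import all_classical all_reals ereal.
Set Implicit Arguments. Unset Strict Implicit. Unset Printing Implicit Defensive.
Import Order.TTheory GRing.Theory Num.Theory.
Local Open Scope ring_scope.
Local Open Scope classical_set_scope.

Section Defs.
Variable R : realType.

Definition is_metric (Z : Type) (d : Z -> Z -> R) : Prop :=
  (forall x y, 0 <= d x y) /\ (forall x y, d x y = 0 <-> x = y) /\
  (forall x y, d x y = d y x) /\ (forall x y z, d x z <= d x y + d y z).

Definition in_cube (n : nat) (t : 'I_n -> R) : Prop := forall i, 0 <= t i <= 1.
Definition in_bdry (n : nat) (t : 'I_n -> R) : Prop :=
  in_cube t /\ exists i, t i = 0 \/ t i = 1.

(* continuity of alpha : [0,1]^n -> Z (product topology = sup-metric topology) *)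
Definition cont_on_cube (Z : Type) (d : Z -> Z -> R) (n : nat)
  (alpha : ('I_n -> R) -> Z) : Prop :=
  forall t, in_cube t -> forall e, 0 < e -> exists2 del, 0 < del &
    forall s, in_cube s -> (forall i, `|s i - t i| < del) -> d (alpha s) (alpha t) < e.

Definition Omega (Z : Type) (d : Z -> Z -> R) (z0 : Z) (n : nat)
  (alpha : ('I_n -> R) -> Z) : Prop :=
  cont_on_cube d alpha /\ forall t, in_bdry t -> alpha t = z0.

Definition homotopic (Z : Type) (d : Z -> Z -> R) (z0 : Z) (n : nat)
  (alpha beta : ('I_n -> R) -> Z) : Prop :=
  Omega d z0 alpha /\ Omega d z0 beta /\
  exists H : R -> ('I_n -> R) -> Z,
    (forall u t, 0 <= u <= 1 -> in_cube t -> forall e, 0 < e -> exists2 del, 0 < del &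
       forall v s, 0 <= v <= 1 -> in_cube s -> `|v - u| < del ->
         (forall i, `|s i - t i| < del) -> d (H v s) (H u t) < e) /\
    (forall t, in_cube t -> H 0 t = alpha t) /\
    (forall t, in_cube t -> H 1 t = beta t) /\
    (forall u t, 0 <= u <= 1 -> in_bdry t -> H u t = z0).

Definition pi_n (Z : Type) (d : Z -> Z -> R) (z0 : Z) (n : nat)
  : set (set (('I_n -> R) -> Z)) :=
  [set a | exists alpha, Omega d z0 alpha /\ a = [set beta | homotopic d z0 alpha beta]].

Definition mu (Z : Type) (d : Z -> Z -> R) (n : nat)
  (alpha beta : ('I_n -> R) -> Z) : \bar R :=
  ereal_sup [set (d (alpha t) (beta t))%:E | t in in_cube (n:=n)].

Definition rho (Z : Type) (d : Z -> Z -> R) (n : nat)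
  (a b : set (('I_n -> R) -> Z)) : \bar R :=
  ereal_inf [set r | exists alpha beta, a alpha /\ b beta /\ r = mu d alpha beta].

Definition fsharp (X Y : Type) (d' : Y -> Y -> R) (y0 : Y) (n : nat) (f : X -> Y)
  (a : set (('I_n -> R) -> X)) : set (('I_n -> R) -> Y) :=
  [set gamma | exists alpha, a alpha /\ homotopic d' y0 (f \o alpha) gamma].

Definition unif_cont (X Y : Type) (d : X -> X -> R) (d' : Y -> Y -> R) (f : X -> Y) : Prop :=
  forall e, 0 < e -> exists2 del, 0 < del & forall x y, d x y < del -> d' (f x) (f y) < e.

End Defs.

From HB Require Import structures.
From mathcomp Require Import all_boot all_order all_algebra.
From mathcomp Require Import all_classical all_reals ereal.
Import Order.TTheory GRing.Theory Num.Theory.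
Local Open Scope ring_scope.
Local Open Scope classical_set_scope.
Set Implicit Arguments.
Unset Strict Implicit.
Unset Printing Implicit Defensive.

(* If [rho a b < del] then some representatives satisfy [mu al be < del]; uniform
   continuity with modulus [del] for [e/2] makes [f \o al] and [f \o be] pointwise
   [e/2]-close, so [mu' (f \o al) (f \o be) <= e/2], and these composites represent
   [f_# a] and [f_# b]. *)

Section Homotopy.
Variables (R : realType) (Z : Type) (d : Z -> Z -> R) (z0 : Z) (n : nat).

Lemma homotopic_refl (alpha : ('I_n -> R) -> Z) :
  Omega d z0 alpha -> homotopic d z0 alpha alpha.
Proof.
move=> [ca ba]; do 2 split=> //.
exists (fun _ => alpha); split; last by do 2 split=> //; move=> u t _; exact: ba.
move=> u t _ ht e e0; have [del del0 cat] := ca t ht e e0.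
by exists del => // v s _ hs _; exact: cat.
Qed.

Lemma homotopic_Omega_r (alpha beta : ('I_n -> R) -> Z) :
  homotopic d z0 alpha beta -> Omega d z0 beta.
Proof. by case=> _ []. Qed.

Lemma rho_le_mu (a b : set (('I_n -> R) -> Z)) alpha beta :
  a alpha -> b beta -> (rho d a b <= mu d alpha beta)%E.
Proof. by move=> aa bb; apply: ereal_inf_lbound; exists alpha, beta. Qed.

End Homotopy.

Section Composition.
Variables (R : realType) (X Y : Type) (d : X -> X -> R) (d' : Y -> Y -> R).
Variables (x0 : X) (y0 : Y) (n : nat) (f : X -> Y).
Hypotheses (f_unif : unif_cont d d' f) (fx0 : f x0 = y0).

Lemma unif_cont_comp_cont_on_cube (alpha : ('I_n -> R) -> X) :
  cont_on_cube d alpha -> cont_on_cube d' (f \o alpha).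
Proof.
move=> ca t ht e e0; have [del1 del10 fdel1] := f_unif e0.
have [del2 del20 adel2] := ca t ht del1 del10.
by exists del2 => // s hs hst; apply: fdel1; exact: adel2.
Qed.

Lemma Omega_comp (alpha : ('I_n -> R) -> X) :
  Omega d x0 alpha -> Omega d' y0 (f \o alpha).
Proof.
move=> [ca ba]; split; first exact: unif_cont_comp_cont_on_cube.
by move=> t ht /=; rewrite ba.
Qed.

Lemma fsharp_comp (a : set (('I_n -> R) -> X)) alpha :
  a alpha -> Omega d x0 alpha -> fsharp d' y0 f a (f \o alpha).
Proof. by move=> aa oa; exists alpha; split; last exact/homotopic_refl/Omega_comp. Qed.

Lemma mu_comp_le (alpha beta : ('I_n -> R) -> X) (del e : R) :
  (forall x y, d x y < del -> d' (f x) (f y) < e) ->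
  (mu d alpha beta < del%:E)%E -> (mu d' (f \o alpha) (f \o beta) <= e%:E)%E.
Proof.
move=> fdel mu_lt; apply: ge_ereal_sup => _ [t ht <-]; rewrite lee_fin; apply/ltW/fdel.
by rewrite -lte_fin; apply: le_lt_trans mu_lt; apply: ereal_sup_ubound; exists t.
Qed.

End Composition.

Theorem proposition4p8 (R : realType) (X Y : Type) (d : X -> X -> R) (d' : Y -> Y -> R)
  (x0 : X) (y0 : Y) (n : nat) (f : X -> Y) :
  is_metric d -> is_metric d' -> (1 <= n)%N ->
  unif_cont d d' f -> f x0 = y0 ->
  forall e : R, 0 < e -> exists2 del : R, 0 < del &
    forall a b, pi_n (n:=n) d x0 a -> pi_n (n:=n) d x0 b ->
      (rho d a b < del%:E)%E ->
      (rho d' (fsharp d' y0 f a) (fsharp d' y0 f b) < e%:E)%E.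
Proof.
move=> _ _ _ f_unif fx0 e e0.
have e20 : 0 < e / 2 by rewrite divr_gt0.
have [del del0 fdel] := f_unif _ e20.
exists del => // a b [a0 [_ ->]] [b0 [_ ->]].
case/ereal_inf_lt=> _ [al [be [a_al [b_be ->]]]] mu_lt.
have fa := fsharp_comp f_unif fx0 a_al (homotopic_Omega_r a_al).
have fb := fsharp_comp f_unif fx0 b_be (homotopic_Omega_r b_be).
apply: (le_lt_trans (rho_le_mu d' fa fb)).
apply: (le_lt_trans (mu_comp_le fdel mu_lt)).
by rewrite lte_fin ltr_pdivrMr // ltr_pMr // ltr1n.
Qed.
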